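(* There exists an absolute constant $C$ such that the following holds. Let $W$ be a non-negative integer-valued random variable with $EW=\lambda\in(0,\infty)$, let $Y\sim\mathrm{Poi}(\lambda)$, let $\eta_k$ and $g_1$ be as defined in the context. Then for every integer $k\ge0$: $$E\,g_1((W+1)\wedge k)\le C(\eta_k+1)\Big(\frac1\lambda+\frac{(k+1-\lambda)_+^2}{\lambda^2}\Big),$$ $$E\big[(W\wedge k)\,g_1(W\wedge k)\big]\le C(\eta_k+1)\Big(1+\frac{(k-\lambda)_+^2}{\lambda}\Big),$$ $$E\big[(W\wedge k)^2\,g_1(W\wedge k)\big]\le C(\eta_k+1)\Big(\lambda+(k-\lambda)_+^2+\frac{(k-\lambda)_+^3}{\lambda}\Big).$$
   Context: $a\wedge b=\min(a,b)$, $x_+=\max(x,0)$. For integers $k\ge 0$, $\eta_k=\sup\{P(W\ge r)/P(Y\ge r): r \text{ integer},\ \lambda\le r\le k\}$ (supremum of the empty set equal to $0$). The function $g_1:\{0,1,2,\dots\}\to\mathbb R$ is defined by $g_1(0)=0$ and, for integers $w\ge1$, $g_1(w)=\frac{e^\lambda w!}{\lambda^{w+1}}P(Y\le w)-\frac{e^\lambda (w-1)!}{\lambda^{w}}P(Y\le w-1)$. *)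

From Stdlib Require Import Reals Lra Factorial.
Open Scope R_scope.

Definition pois_cdf (lam : R) (w : nat) : R :=
  sum_f_R0 (fun i => exp (- lam) * lam ^ i / INR (fact i)) w.

Definition pois_tail (lam : R) (r : nat) : R :=
  match r with O => 1 | S r' => 1 - pois_cdf lam r' end.

(* The law of a nonnegative integer-valued W is given by its pmf p (p n = P(W = n)).
   P(W >= r) = 1 - sum_{i<r} p i. *)
Definition pmf_tail (p : nat -> R) (r : nat) : R :=
  match r with O => 1 | S r' => 1 - sum_f_R0 p r' end.

(* eta_k = sup { P(W>=r)/P(Y>=r) : r integer, lam <= r <= k }, sup of empty set = 0.
   All ratios are >= 0, so the max with the initial value 0 equals the sup. *)
Fixpoint eta (p : nat -> R) (lam : R) (k : nat) : R :=
  let cur r := if Rle_dec lam (INR r) then pmf_tail p r / pois_tail lam r else 0 in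
  match k with
  | O => Rmax 0 (cur O)
  | S k' => Rmax (eta p lam k') (cur k)
  end.

Definition g1 (lam : R) (w : nat) : R :=
  match w with
  | O => 0
  | S w' => exp lam * INR (fact w) / lam ^ (w + 1) * pois_cdf lam w
            - exp lam * INR (fact w') / lam ^ w * pois_cdf lam w'
  end.

Definition pospart (x : R) : R := Rmax x 0.

From Stdlib Require Import Reals Lra Psatz Factorial.
Open Scope R_scope.

(* Let pi be the Poisson(lam) pmf and F(w) = P(Y <= w) / (lam pi(w)).  Then
   g1(w+1) = F(w+1) - F(w), and the Stein recursion lam F(w+1) = 1 + (w+1) F(w)
   shows that g1 is nonnegative, nondecreasing and at most 1/lam below the mean;
   it also yields the pointwise estimate lam j g1(j) pi(j) <= j pi(j) + (j - lam)
   for j >= lam and bounds on g1(j) P(Y >= j) at the truncation point.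

   The comparison step [expectation_le] handles any nondecreasing G >= 0 that is
   constant after some K <= k.  By the layer-cake formula, E G(W) is G(0) plus the
   increments of G weighted by P(W >= r).  For r < lam that tail is at most 1 and
   the increments telescope to a value of G below the mean; for r >= lam it is at
   most eta_k P(Y >= r), and summation by parts turns these terms into the
   Poisson side E[G(Y ^ K); Y >= lam].  Applying this to G(n) = g1((n+1) ^ k),
   (n ^ k) g1(n ^ k) and (n ^ k)^2 g1(n ^ k) gives the three inequalities with
   constants 5, 8 and 18, hence the theorem with C = 18. *)

Lemma div_nonneg a b : 0 <= a -> 0 < b -> 0 <= a / b.
Proof. intros Ha Hb. unfold Rdiv. apply Rmult_le_pos; [exact Ha|left; apply Rinv_0_lt_compat, Hb]. Qed.

Lemma le_div_iff a b c : 0 < c -> (a <= b / c <-> a * c <= b).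
Proof.
  intros Hc. split; intros H.
  - apply (Rmult_le_compat_r c) in H; [|lra]. unfold Rdiv in H. rewrite Rmult_assoc, Rinv_l in H; lra.
  - apply (Rmult_le_reg_r c); [exact Hc|]. unfold Rdiv. rewrite Rmult_assoc, Rinv_l; lra.
Qed.

Lemma div_le_iff a b c : 0 < c -> (a / c <= b <-> a <= b * c).
Proof.
  intros Hc. split; intros H.
  - apply (Rmult_le_compat_r c) in H; [|lra]. unfold Rdiv in H. rewrite Rmult_assoc, Rinv_l in H; lra.
  - apply (Rmult_le_reg_r c); [exact Hc|]. unfold Rdiv. rewrite Rmult_assoc, Rinv_l; lra.
Qed.

Lemma pospart_nonneg x : 0 <= pospart x.
Proof. apply Rmax_r. Qed.

Lemma pospart_mono a b : a <= b -> pospart a <= pospart b.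
Proof. intros Hab. unfold pospart. apply Rmax_lub; [apply Rle_trans with b; [lra|apply Rmax_l]|apply Rmax_r]. Qed.

(* [rsum f n] is the sum of the [n] terms [f 0 + ... + f (n-1)]; unlike
   [sum_f_R0] it has an empty case, which the summation-by-parts needs. *)
Fixpoint rsum (f : nat -> R) (n : nat) : R :=
  match n with O => 0 | S n => rsum f n + f n end.

Lemma sum_f_R0_rsum f n : sum_f_R0 f n = rsum f (S n).
Proof. induction n as [|n IH]; simpl in *; [lra | rewrite IH; reflexivity]. Qed.

Lemma rsum_ext f g n : (forall i, (i < n)%nat -> f i = g i) -> rsum f n = rsum g n.
Proof.
  induction n as [|n IH]; intros H; simpl; [reflexivity|].
  rewrite IH by (intros; apply H; lia). rewrite H by lia. reflexivity.
Qed.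

Lemma rsum_le f g n : (forall i, (i < n)%nat -> f i <= g i) -> rsum f n <= rsum g n.
Proof.
  induction n as [|n IH]; intros H; simpl; [lra|].
  assert (f n <= g n) by (apply H; lia).
  assert (rsum f n <= rsum g n) by (apply IH; intros; apply H; lia). lra.
Qed.

Lemma rsum_nonneg f n : (forall i, 0 <= f i) -> 0 <= rsum f n.
Proof. intros H; induction n as [|n IH]; simpl; [lra|]. specialize (H n); lra. Qed.

Lemma rsum_mono f n m : (forall i, 0 <= f i) -> (n <= m)%nat -> rsum f n <= rsum f m.
Proof. intros H Hnm; induction Hnm as [|m _ IH]; simpl; [lra|]. specialize (H m); lra. Qed.

Lemma rsum_plus f g n : rsum (fun i => f i + g i) n = rsum f n + rsum g n.
Proof. induction n; simpl; lra. Qed.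

Lemma rsum_scal c f n : rsum (fun i => c * f i) n = c * rsum f n.
Proof. induction n as [|n IH]; simpl; [lra|]. rewrite IH; ring. Qed.

Lemma rsum_shift f n : rsum f (S n) = f 0%nat + rsum (fun i => f (S i)) n.
Proof. induction n as [|n IH]; [simpl; ring|]. change (rsum f (S (S n))) with (rsum f (S n) + f (S n)). rewrite IH. simpl. ring. Qed.

Lemma rsum_exchange (a : nat -> nat -> R) N K :
  rsum (fun n => rsum (fun i => a n i) K) N = rsum (fun i => rsum (fun n => a n i) N) K.
Proof.
  induction N as [|N IH]; simpl; [induction K; simpl; lra|].
  rewrite IH, <- rsum_plus. reflexivity.
Qed.

Lemma rsum_by_parts (G c : nat -> R) K :
  rsum (fun i => (G (S i) - G i) * c (S i)) K =
  rsum (fun i => G (S i) * (c (S i) - c (S (S i)))) K + G K * c (S K) - G 0%nat * c 1%nat.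
Proof. induction K as [|K IH]; simpl; [ring|]. rewrite IH. ring. Qed.

Lemma infinite_sum_le f E B : infinite_sum f E -> (forall n, rsum f n <= B) -> E <= B.
Proof.
  intros HE HB. assert (Hc : Un_cv (fun _ => B) B).
  { intros e He; exists O; intros; unfold R_dist; rewrite Rminus_diag, Rabs_R0; lra. }
  eapply Rle_cv_lim; [|exact HE|exact Hc].
  intros n; simpl; rewrite sum_f_R0_rsum; apply HB.
Qed.

Lemma rsum_le_infinite_sum f L n : (forall i, 0 <= f i) -> infinite_sum f L -> rsum f n <= L.
Proof.
  intros Hf HL. apply Rle_trans with (rsum f (S n)); [apply rsum_mono; auto|].
  rewrite <- sum_f_R0_rsum. apply (growing_ineq (fun n => sum_f_R0 f n)); [|exact HL].
  intros m; simpl; specialize (Hf (S m)); lra.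
Qed.

Definition poisson (lam : R) (i : nat) : R := exp (- lam) * lam ^ i / INR (fact i).

Lemma INR_fact_pos i : 0 < INR (fact i).
Proof. apply lt_0_INR, lt_O_fact. Qed.

Lemma poisson_pos lam i : 0 < lam -> 0 < poisson lam i.
Proof.
  intros Hlam. unfold poisson. pose proof (INR_fact_pos i).
  pose proof (exp_pos (- lam)). pose proof (pow_lt lam i Hlam).
  apply Rdiv_lt_0_compat; [apply Rmult_lt_0_compat|]; lra.
Qed.

Lemma poisson_succ lam i : poisson lam (S i) = poisson lam i * lam / INR (S i).
Proof.
  unfold poisson. rewrite fact_simpl, mult_INR. simpl pow.
  pose proof (INR_fact_pos i). assert (0 < INR (S i)) by (apply lt_0_INR; lia).
  field; lra.
Qed.

Lemma pois_cdf_rsum lam w : pois_cdf lam w = rsum (poisson lam) (S w).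
Proof. apply sum_f_R0_rsum. Qed.

Lemma pois_tail_rsum lam r : pois_tail lam r = 1 - rsum (poisson lam) r.
Proof. destruct r; simpl; [lra|]. rewrite pois_cdf_rsum. reflexivity. Qed.

Lemma pmf_tail_rsum p r : pmf_tail p r = 1 - rsum p r.
Proof. destruct r; simpl; [lra|]. rewrite sum_f_R0_rsum. reflexivity. Qed.

Lemma poisson_sum_one lam : infinite_sum (poisson lam) 1.
Proof.
  pose proof (proj2_sig (exist_exp lam)) as Hexp. unfold exp_in in Hexp. fold (exp lam) in Hexp.
  assert (Hc : Un_cv (fun _ => exp (- lam)) (exp (- lam))).
  { intros e He; exists O; intros; unfold R_dist; rewrite Rminus_diag, Rabs_R0; lra. }
  pose proof (CV_mult _ _ _ _ Hc Hexp) as Hprod.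
  replace 1 with (exp (- lam) * exp lam) by (rewrite <- exp_plus, Rplus_opp_l; apply exp_0).
  intros e He; destruct (Hprod e He) as [N HN]; exists N; intros n Hn.
  replace (sum_f_R0 (poisson lam) n)
    with (exp (- lam) * sum_f_R0 (fun i => / INR (fact i) * lam ^ i) n); [exact (HN n Hn)|].
  rewrite scal_sum. apply sum_eq. intros i _. unfold poisson, Rdiv. ring.
Qed.

Section Poisson.
Variable lam : R.
Hypothesis Hlam : 0 < lam.

Lemma poisson_rsum_nonneg n : 0 <= rsum (poisson lam) n.
Proof. apply rsum_nonneg; intros; left; apply poisson_pos; auto. Qed.

Lemma poisson_rsum_le1 n : rsum (poisson lam) n <= 1.
Proof. apply rsum_le_infinite_sum; [intros; left; apply poisson_pos; auto|apply poisson_sum_one]. Qed.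

Lemma pois_tail_pos r : 0 < pois_tail lam r.
Proof.
  rewrite pois_tail_rsum. pose proof (poisson_rsum_le1 (S r)). simpl in *.
  pose proof (poisson_pos lam r Hlam). lra.
Qed.

Lemma pois_tail_le1 r : pois_tail lam r <= 1.
Proof. rewrite pois_tail_rsum. pose proof (poisson_rsum_nonneg r). lra. Qed.

Lemma pois_tail_step r : pois_tail lam r - pois_tail lam (S r) = poisson lam r.
Proof. rewrite !pois_tail_rsum; simpl; ring. Qed.

(* Beyond the mode the Poisson weights decay at least geometrically with
   ratio lam/(m+1); this invariant records the resulting partial sums. *)
Lemma poisson_window m j :
  (INR m + 1 - lam) * (rsum (poisson lam) (m + S j) - rsum (poisson lam) m)
  + lam * poisson lam (m + j) <= (INR m + 1) * poisson lam m.
Proof.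
  induction j as [|j IH].
  - rewrite Nat.add_0_r, Nat.add_1_r. simpl. lra.
  - replace (m + S (S j))%nat with (S (m + S j)) by lia.
    replace (m + S j)%nat with (S (m + j)) in * by lia.
    change (rsum (poisson lam) (S (S (m + j))))
      with (rsum (poisson lam) (S (m + j)) + poisson lam (S (m + j))).
    assert (Hdecay : (INR m + 1) * poisson lam (S (m + j)) <= lam * poisson lam (m + j)).
    { rewrite poisson_succ. pose proof (poisson_pos lam (m + j) Hlam).
      assert (Hle : INR m + 1 <= INR (S (m + j))) by (rewrite S_INR, plus_INR; pose proof (pos_INR j); lra).
      assert (0 < INR (S (m + j))) by (apply lt_0_INR; lia).
      apply (Rmult_le_reg_r (INR (S (m + j)))); auto.
      replace ((INR m + 1) * (poisson lam (m + j) * lam / INR (S (m + j))) * INR (S (m + j)))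
        with ((INR m + 1) * (poisson lam (m + j) * lam)) by (field; lra).
      assert (0 < poisson lam (m + j) * lam) by (apply Rmult_lt_0_compat; lra). nra. }
    lra.
Qed.

Lemma pois_tail_le m : lam < INR m + 1 ->
  pois_tail lam m <= poisson lam m * (INR m + 1) / (INR m + 1 - lam).
Proof.
  intros Hm. set (B := (INR m + 1) * poisson lam m / (INR m + 1 - lam)).
  assert (HB : 0 <= B).
  { pose proof (poisson_pos lam m Hlam). pose proof (pos_INR m). unfold B.
    apply div_nonneg; [apply Rmult_le_pos|]; lra. }
  assert (Hpart : forall n, rsum (poisson lam) n <= rsum (poisson lam) m + B).
  { intros n. destruct (Nat.le_gt_cases n m) as [Hn|Hn].
    - pose proof (rsum_mono (poisson lam) n m (fun i => Rlt_le _ _ (poisson_pos lam i Hlam)) Hn). lra.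
    - replace n with (m + S (n - S m))%nat by lia.
      pose proof (poisson_window m (n - S m)) as Hwin.
      pose proof (poisson_pos lam (m + (n - S m)) Hlam).
      assert (Hdiff : rsum (poisson lam) (m + S (n - S m)) - rsum (poisson lam) m <= B).
      { unfold B. apply le_div_iff; [lra|]. nra. }
      lra. }
  pose proof (infinite_sum_le _ _ _ (poisson_sum_one lam) Hpart).
  rewrite pois_tail_rsum. unfold B in *. replace (poisson lam m * (INR m + 1)) with ((INR m + 1) * poisson lam m) by ring. lra.
Qed.

End Poisson.

Definition below_mean (lam : R) (r : nat) : R := if Rle_dec lam (INR r) then 0 else 1.
Definition poisson_above (lam : R) (r : nat) : R := if Rle_dec lam (INR r) then poisson lam r else 0.
Definition tail_above_mean (lam : R) (r : nat) : R :=
  if Rle_dec lam (INR r) then pois_tail lam r else 0.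

(* F(w) = P(Y <= w) / (lam pi(w)); [g1] is its forward difference, and F
   satisfies the Stein recursion lam F(w+1) = 1 + (w+1) F(w). *)
Definition cdf_ratio (lam : R) (w : nat) : R := rsum (poisson lam) (S w) / (lam * poisson lam w).

Section G1.
Variable lam : R.
Hypothesis Hlam : 0 < lam.

Lemma cdf_ratio_nonneg w : 0 <= cdf_ratio lam w.
Proof.
  pose proof (poisson_pos lam w Hlam). apply div_nonneg; [apply poisson_rsum_nonneg; auto|nra].
Qed.

Lemma cdf_ratio_le w : cdf_ratio lam w <= / (lam * poisson lam w).
Proof.
  pose proof (poisson_pos lam w Hlam). pose proof (poisson_rsum_le1 lam Hlam (S w)).
  unfold cdf_ratio. apply div_le_iff; [nra|]. rewrite Rinv_l; nra.
Qed.

Lemma cdf_ratio_zero : cdf_ratio lam 0 = 1 / lam.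
Proof. unfold cdf_ratio. simpl rsum. pose proof (poisson_pos lam 0 Hlam). field; lra. Qed.

Lemma cdf_ratio_succ w : lam * cdf_ratio lam (S w) = 1 + INR (S w) * cdf_ratio lam w.
Proof.
  unfold cdf_ratio. change (rsum (poisson lam) (S (S w)))
    with (rsum (poisson lam) (S w) + poisson lam (S w)).
  rewrite poisson_succ. pose proof (poisson_pos lam w Hlam).
  assert (0 < INR (S w)) by (apply lt_0_INR; lia). field; lra.
Qed.

Lemma g1_succ w : g1 lam (S w) = cdf_ratio lam (S w) - cdf_ratio lam w.
Proof.
  assert (Hcoef : forall v, exp lam * INR (fact v) / lam ^ (v + 1) = / (lam * poisson lam v)).
  { intros v. unfold poisson. rewrite exp_Ropp, Nat.add_1_r. simpl pow.
    pose proof (INR_fact_pos v). pose proof (exp_pos lam). pose proof (pow_lt lam v Hlam).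
    field; repeat split; lra. }
  unfold g1. rewrite (Hcoef (S w)). replace (lam ^ S w) with (lam ^ (w + 1)) by (f_equal; lia).
  rewrite (Hcoef w). unfold cdf_ratio. rewrite !pois_cdf_rsum.
  pose proof (poisson_pos lam (S w) Hlam). pose proof (poisson_pos lam w Hlam). field; lra.
Qed.

Lemma g1_succ_form w : lam * g1 lam (S w) = 1 + (INR (S w) - lam) * cdf_ratio lam w.
Proof. rewrite g1_succ. pose proof (cdf_ratio_succ w). lra. Qed.

Lemma g1_rec w : lam * g1 lam (S w) = cdf_ratio lam w + INR w * g1 lam w.
Proof.
  rewrite g1_succ_form. destruct w as [|w].
  - rewrite cdf_ratio_zero. simpl g1. simpl INR. field. lra.
  - rewrite g1_succ. pose proof (cdf_ratio_succ w). rewrite !S_INR in *. nra.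
Qed.

Lemma g1_nonneg w : 0 <= g1 lam w.
Proof.
  induction w as [|w IH]; [simpl; lra|].
  pose proof (g1_rec w). pose proof (cdf_ratio_nonneg w). pose proof (pos_INR w).
  assert (0 <= lam * g1 lam (S w)) by nra. nra.
Qed.

(* Differencing the recursion: lam (g1(w+2) - g1(w+1)) = 2 g1(w+1) + w (g1(w+1) - g1(w)),
   so the increments of g1 stay nonnegative. *)
Lemma g1_step w : g1 lam w <= g1 lam (S w).
Proof.
  induction w as [|w IH]; [apply g1_nonneg|].
  assert (Hdiff : lam * (g1 lam (S (S w)) - g1 lam (S w))
                  = 2 * g1 lam (S w) + INR w * (g1 lam (S w) - g1 lam w)).
  { pose proof (g1_rec (S w)). pose proof (g1_rec w). pose proof (g1_succ w).
    rewrite S_INR in *. lra. }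
  pose proof (g1_nonneg (S w)). pose proof (pos_INR w).
  assert (0 <= lam * (g1 lam (S (S w)) - g1 lam (S w))) by (rewrite Hdiff; nra). nra.
Qed.

Lemma g1_monotone a b : (a <= b)%nat -> g1 lam a <= g1 lam b.
Proof. induction 1 as [|b _ IH]; [lra|]. pose proof (g1_step b). lra. Qed.

Lemma cdf_ratio_small w : INR w <= lam -> cdf_ratio lam w <= (INR w + 1) / lam.
Proof.
  induction w as [|w IH]; intros Hw.
  - rewrite cdf_ratio_zero. simpl INR. lra.
  - rewrite S_INR in *. pose proof (IH ltac:(lra)) as IHw. pose proof (cdf_ratio_succ w).
    rewrite S_INR in *. pose proof (pos_INR w).
    apply (le_div_iff _ _ _ Hlam) in IHw.
    apply (le_div_iff _ _ _ Hlam). nra.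
Qed.

Lemma g1_small w : INR w <= lam -> g1 lam w <= 1 / lam.
Proof.
  intros Hw. apply le_div_iff; auto. destruct w as [|w]; [simpl; lra|].
  pose proof (g1_succ_form w). pose proof (cdf_ratio_nonneg w). nra.
Qed.

Lemma g1_times_poisson w : lam * g1 lam (S w) * poisson lam (S w) =
   poisson lam (S w) + (INR (S w) - lam) * rsum (poisson lam) (S w) / INR (S w).
Proof.
  rewrite g1_succ_form. unfold cdf_ratio. rewrite poisson_succ.
  pose proof (poisson_pos lam w Hlam). assert (0 < INR (S w)) by (apply lt_0_INR; lia).
  field; repeat split; lra.
Qed.

End G1.

Section Estimates.
Variable lam : R.
Hypothesis Hlam : 0 < lam.

Lemma weighted_term j :
  lam * (INR j * g1 lam j) * poisson_above lam j
  <= INR j * poisson lam j + pospart (INR j - lam).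
Proof.
  pose proof (poisson_pos lam j Hlam). pose proof (pos_INR j). pose proof (pospart_nonneg (INR j - lam)).
  unfold poisson_above. destruct (Rle_dec lam (INR j)) as [Hj|Hj]; [|nra].
  destruct j as [|w]; [simpl in Hj; lra|].
  assert (Hpos : pospart (INR (S w) - lam) = INR (S w) - lam) by (apply Rmax_left; lra).
  assert (0 < INR (S w)) by (apply lt_0_INR; lia).
  assert (Hterm : lam * g1 lam (S w) * poisson lam (S w) <= poisson lam (S w) + (INR (S w) - lam) / INR (S w)).
  { rewrite (g1_times_poisson lam Hlam). pose proof (poisson_rsum_le1 lam Hlam (S w)).
    pose proof (poisson_rsum_nonneg lam Hlam (S w)).
    apply Rplus_le_compat_l. unfold Rdiv. apply Rmult_le_compat_r; [left; apply Rinv_0_lt_compat; lra|]. nra. }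
  rewrite Hpos. replace (INR (S w) * poisson lam (S w) + (INR (S w) - lam))
    with (INR (S w) * (poisson lam (S w) + (INR (S w) - lam) / INR (S w))) by (field; lra).
  replace (lam * (INR (S w) * g1 lam (S w)) * poisson lam (S w))
    with (INR (S w) * (lam * g1 lam (S w) * poisson lam (S w))) by ring.
  apply Rmult_le_compat_l; lra.
Qed.

Lemma g1_tail_at j : lam * g1 lam j * tail_above_mean lam j <= 3.
Proof.
  unfold tail_above_mean. destruct (Rle_dec lam (INR j)) as [Hj|Hj]; [|lra].
  destruct j as [|w]; [simpl in Hj; lra|].
  rewrite (g1_succ_form lam Hlam). set (a := INR (S w)) in *.
  assert (Ha : 0 < a) by (apply lt_0_INR; lia).
  pose proof (pois_tail_le1 lam Hlam (S w)). pose proof (pois_tail_pos lam Hlam (S w)).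
  pose proof (poisson_pos lam w Hlam). pose proof (cdf_ratio_nonneg lam Hlam w).
  pose proof (cdf_ratio_le lam Hlam w) as HF.
  set (q := pois_tail lam (S w)) in *. set (P := poisson lam w) in *. set (F := cdf_ratio lam w) in *.
  assert (Hq : q <= P * lam * (a + 1) / (a * (a + 1 - lam))).
  { pose proof (pois_tail_le lam Hlam (S w) ltac:(fold a; lra)) as HT.
    rewrite poisson_succ in HT. fold a P q in HT. eapply Rle_trans; [exact HT|]. right; field; lra. }
  assert (HFq : F * q <= (a + 1) / (a * (a + 1 - lam))).
  { eapply Rle_trans; [apply Rmult_le_compat; [lra|lra|exact HF|exact Hq]|].
    right; field; repeat split; lra. }
  assert (Hfrac : (a - lam) * ((a + 1) / (a * (a + 1 - lam))) <= 2).
  { rewrite Rmult_div_assoc. apply div_le_iff; [nra|]. nra. }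
  assert ((a - lam) * (F * q) <= 2) by (eapply Rle_trans; [apply Rmult_le_compat_l; [lra|exact HFq]|exact Hfrac]).
  nra.
Qed.

Lemma g1_tail_after w : lam < INR (S w) ->
  lam * g1 lam (S w) * pois_tail lam (S (S w)) <= 1 + 2 * lam / INR (S w).
Proof.
  intros Hw. rewrite (g1_succ_form lam Hlam). set (a := INR (S w)) in *.
  assert (Ha : 0 < a) by (apply lt_0_INR; lia).
  pose proof (pois_tail_le1 lam Hlam (S (S w))). pose proof (pois_tail_pos lam Hlam (S (S w))).
  pose proof (poisson_pos lam w Hlam). pose proof (cdf_ratio_nonneg lam Hlam w).
  pose proof (cdf_ratio_le lam Hlam w) as HF.
  set (q := pois_tail lam (S (S w))) in *. set (P := poisson lam w) in *. set (F := cdf_ratio lam w) in *.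
  assert (Hq : q <= P * lam * lam * (a + 2) / (a * (a + 1) * (a + 2 - lam))).
  { pose proof (pois_tail_le lam Hlam (S (S w)) ltac:(rewrite S_INR; fold a; lra)) as HT.
    rewrite poisson_succ, poisson_succ, (S_INR (S w)) in HT. fold a P q in HT.
    eapply Rle_trans; [exact HT|]. right; field; lra. }
  assert (HFq : F * q <= lam * (a + 2) / (a * (a + 1) * (a + 2 - lam))).
  { eapply Rle_trans; [apply Rmult_le_compat; [lra|lra|exact HF|exact Hq]|].
    right; field; repeat split; lra. }
  assert (Hfrac : (a - lam) * (lam * (a + 2) / (a * (a + 1) * (a + 2 - lam))) <= 2 * lam / a).
  { rewrite Rmult_div_assoc. apply div_le_iff; [apply Rmult_lt_0_compat; nra|].
    replace (2 * lam / a * (a * (a + 1) * (a + 2 - lam)))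
      with (lam * (2 * (a + 1) * (a + 2 - lam))) by (field; lra).
    replace ((a - lam) * (lam * (a + 2))) with (lam * ((a - lam) * (a + 2))) by ring.
    apply Rmult_le_compat_l; nra. }
  assert ((a - lam) * (F * q) <= 2 * lam / a) by (eapply Rle_trans; [apply Rmult_le_compat_l; [lra|exact HFq]|exact Hfrac]).
  nra.
Qed.

Lemma weighted_small n m : INR n <= lam -> INR n ^ S m * g1 lam n <= lam ^ m.
Proof.
  intros Hn. pose proof (g1_small lam Hlam n Hn) as Hg. pose proof (g1_nonneg lam Hlam n).
  pose proof (pos_INR n). apply (le_div_iff _ _ _ Hlam) in Hg.
  assert (Hpow : INR n ^ m <= lam ^ m) by (apply pow_incr; lra).
  replace (INR n ^ S m * g1 lam n) with (INR n ^ m * (INR n * g1 lam n)) by (simpl; ring).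
  apply Rle_trans with (lam ^ m * 1); [|lra]. apply Rmult_le_compat; [apply pow_le; lra|nra|exact Hpow|].
  apply Rle_trans with (lam * g1 lam n); [apply Rmult_le_compat_r; lra|lra].
Qed.

Lemma weighted_tail k m :
  INR k ^ S m * g1 lam k * pois_tail lam (S k) <= lam ^ m + INR k ^ S m / lam + 2 * INR k ^ m.
Proof.
  pose proof (pois_tail_le1 lam Hlam (S k)). pose proof (pois_tail_pos lam Hlam (S k)).
  pose proof (g1_nonneg lam Hlam k). pose proof (pos_INR k).
  assert (0 <= INR k ^ m) by (apply pow_le; lra).
  assert (0 <= INR k ^ S m) by (apply pow_le; lra).
  assert (0 <= INR k ^ S m / lam) by (apply div_nonneg; lra).
  destruct (Rle_dec (INR k) lam) as [Hk|Hk].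
  - pose proof (weighted_small k m Hk). assert (0 <= INR k ^ S m * g1 lam k) by nra. nra.
  - destruct k as [|w]; [simpl in Hk; lra|].
    pose proof (g1_tail_after w ltac:(lra)) as Hafter. set (a := INR (S w)) in *.
    assert (0 < a) by (apply lt_0_INR; lia).
    assert (Hscale : a ^ S m * g1 lam (S w) * pois_tail lam (S (S w))
                     = a ^ S m / lam * (lam * g1 lam (S w) * pois_tail lam (S (S w)))) by (field; lra).
    rewrite Hscale. assert (0 <= a ^ S m / lam) by (apply div_nonneg; [apply pow_le|]; lra).
    apply Rle_trans with (a ^ S m / lam * (1 + 2 * lam / a)); [apply Rmult_le_compat_l; lra|].
    replace (a ^ S m / lam * (1 + 2 * lam / a)) with (a ^ S m / lam + 2 * a ^ m) by (simpl; field; lra).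
    pose proof (pow_le lam m). lra.
Qed.

End Estimates.

Section Sums.
Variable lam : R.
Hypothesis Hlam : 0 < lam.

Lemma first_moment n : rsum (fun i => INR (S i) * poisson lam (S i)) n <= lam.
Proof.
  rewrite (rsum_ext _ (fun i => lam * poisson lam i)).
  - rewrite rsum_scal. pose proof (poisson_rsum_le1 lam Hlam n). nra.
  - intros i _. rewrite poisson_succ. assert (0 < INR (S i)) by (apply lt_0_INR; lia). field; lra.
Qed.

Lemma pospart_sum n :
  (INR n < lam -> rsum (fun i => pospart (INR (S i) - lam)) n = 0) /\
  rsum (fun i => pospart (INR (S i) - lam)) n <= 2 * pospart (INR n - lam) ^ 2 + lam.
Proof.
  induction n as [|n [Hzero Hbound]]; [simpl; split; [auto|]; unfold pospart; rewrite Rmax_right; lra|].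
  cbn [rsum]. unfold pospart in *. rewrite S_INR in *. pose proof (pos_INR n).
  destruct (Rle_dec lam (INR n + 1)) as [Hn1|Hn1].
  - split; [intros; lra|]. rewrite (Rmax_left (INR n + 1 - lam) 0) by lra.
    destruct (Rle_dec lam (INR n)) as [Hn|Hn].
    + rewrite (Rmax_left (INR n - lam) 0) in Hbound by lra. nra.
    + rewrite Hzero by lra. nra.
  - rewrite (Rmax_right (INR n + 1 - lam) 0) by lra.
    rewrite (Rmax_right (INR n - lam) 0) in Hbound by lra.
    split; [intros; rewrite Hzero by lra; lra|lra].
Qed.

(* The excess x = (k - lam)_+ of an integer k over lam > 0 is zero, or at least 1/2,
   or else lam >= 1/2 (since k > lam forces k >= 1).  This lets lower powers of x
   be absorbed into lam and higher powers of x. *)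
Lemma excess_cases k : let x := pospart (INR k - lam) in x = 0 \/ 1/2 <= x \/ 1/2 <= lam.
Proof.
  intros x. unfold x, pospart. destruct (Rle_dec (INR k) lam) as [Hk|Hk].
  - left. apply Rmax_right. lra.
  - rewrite Rmax_left by lra. destruct k as [|k]; [simpl in Hk; lra|].
    rewrite S_INR in *. pose proof (pos_INR k). right. lra.
Qed.

Lemma excess_le k : pospart (INR k - lam) <= 2 * lam + 2 * pospart (INR k - lam) ^ 2.
Proof.
  pose proof (pospart_nonneg (INR k - lam)).
  destruct (excess_cases k) as [Hx|[Hx|Hx]]; [rewrite Hx; lra|nra|].
  destruct (Rle_dec (pospart (INR k - lam)) 1); nra.
Qed.

Lemma excess_sq_le k :
  pospart (INR k - lam) ^ 2 <= 2 * lam * pospart (INR k - lam) ^ 2 + 2 * pospart (INR k - lam) ^ 3.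
Proof.
  pose proof (pospart_nonneg (INR k - lam)).
  destruct (excess_cases k) as [Hx|[Hx|Hx]]; [rewrite Hx; lra| |]; simpl; nra.
Qed.

Lemma index_le_excess k : INR k <= lam + pospart (INR k - lam).
Proof. unfold pospart. pose proof (Rmax_l (INR k - lam) 0). lra. Qed.

End Sums.

Lemma eta_nonneg p lam k : 0 <= eta p lam k.
Proof. induction k as [|k IH]; simpl; [apply Rmax_l|]. eapply Rle_trans; [apply IH|apply Rmax_l]. Qed.

Lemma eta_ratio_le p lam k r : (r <= k)%nat ->
  (if Rle_dec lam (INR r) then pmf_tail p r / pois_tail lam r else 0) <= eta p lam k.
Proof.
  induction 1 as [|k _ IH].
  - destruct r; simpl; apply Rmax_r.
  - simpl. eapply Rle_trans; [apply IH|apply Rmax_l].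
Qed.

Lemma pmf_tail_split p lam k r : (forall n, 0 <= p n) -> 0 < lam -> (r <= k)%nat ->
  pmf_tail p r <= below_mean lam r + eta p lam k * tail_above_mean lam r.
Proof.
  intros Hp Hlam Hrk. pose proof (eta_ratio_le p lam k r Hrk) as Hratio.
  unfold below_mean, tail_above_mean. destruct (Rle_dec lam (INR r)) as [Hr|Hr].
  - pose proof (pois_tail_pos lam Hlam r) as Hq.
    apply (div_le_iff _ _ _ Hq) in Hratio. lra.
  - rewrite pmf_tail_rsum. pose proof (rsum_nonneg p r Hp). lra.
Qed.

(* The Poisson side E[G(Y ^ K); Y >= lam], Y ~ Poi(lam), for G constant after K. *)
Definition poisson_side (lam : R) (G : nat -> R) (K : nat) : R :=
  rsum (fun i => G (S i) * poisson_above lam (S i)) K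
  + G K * tail_above_mean lam (S K).

Definition indicator_ge (r n : nat) : R := if Nat.leb r n then 1 else 0.

Lemma increment_decomposition (G : nat -> R) K n : (forall m, (K <= m)%nat -> G m = G K) ->
  G n = G 0%nat + rsum (fun i => (G (S i) - G i) * indicator_ge (S i) n) K.
Proof.
  intros HK.
  assert (Hpart : forall K', G 0%nat + rsum (fun i => (G (S i) - G i) * indicator_ge (S i) n) K'
                             = G (Nat.min n K')).
  { induction K' as [|K' IH]; [simpl; rewrite Nat.min_0_r; lra|].
    cbn [rsum]. rewrite <- Rplus_assoc, IH. unfold indicator_ge.
    destruct (Nat.leb (S K') n) eqn:E.
    - apply Nat.leb_le in E. rewrite (Nat.min_r n (S K')), (Nat.min_r n K') by lia. ring.
    - apply Nat.leb_gt in E. rewrite (Nat.min_l n (S K')), (Nat.min_l n K') by lia. ring. }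
  rewrite Hpart. destruct (Nat.le_gt_cases n K); [f_equal; lia|].
  rewrite Nat.min_r by lia. apply HK; lia.
Qed.

Lemma below_mean_telescope (G : nat -> R) lam K : 0 < lam ->
  exists n, (n <= K)%nat /\ INR n < lam /\
    G 0%nat + rsum (fun i => (G (S i) - G i) * below_mean lam (S i)) K = G n /\
    (INR K < lam -> n = K).
Proof.
  intros Hlam. induction K as [|K [n [HnK [Hn [Hsum Hlast]]]]].
  - exists 0%nat. simpl. repeat split; auto; lra.
  - cbn [rsum]. unfold below_mean at 2. destruct (Rle_dec lam (INR (S K))) as [HK|HK].
    + exists n. repeat split; [lia|lra|rewrite <- Hsum; ring|intros; lra].
    + rewrite S_INR in HK. exists (S K). rewrite Hlast in Hsum by lra.
      split; [lia|split; [rewrite S_INR; lra|split; [|auto]]].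
      rewrite <- Rplus_assoc, Hsum. ring.
Qed.

Lemma above_mean_by_parts (G : nat -> R) lam K : 0 < lam ->
  (forall n, 0 <= G n) ->
  rsum (fun i => (G (S i) - G i) * tail_above_mean lam (S i)) K <= poisson_side lam G K.
Proof.
  intros Hlam HG. rewrite rsum_by_parts. unfold poisson_side.
  assert (Hstep : forall i, tail_above_mean lam (S i) - tail_above_mean lam (S (S i))
                            <= poisson_above lam (S i)).
  { intros i. unfold tail_above_mean, poisson_above. pose proof (pois_tail_pos lam Hlam (S (S i))).
    destruct (Rle_dec lam (INR (S i))) as [H1|H1]; destruct (Rle_dec lam (INR (S (S i)))) as [H2|H2].
    - rewrite pois_tail_step; auto. lra.
    - rewrite (S_INR (S i)) in H2. lra.
    - lra.
    - lra. }
  assert (0 <= G 0%nat * tail_above_mean lam 1).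
  { pose proof (HG 0%nat). unfold tail_above_mean. destruct Rle_dec; [|lra].
    pose proof (pois_tail_pos lam Hlam 1). nra. }
  assert (rsum (fun i => G (S i) * (tail_above_mean lam (S i) - tail_above_mean lam (S (S i)))) K
          <= rsum (fun i => G (S i) * poisson_above lam (S i)) K).
  { apply rsum_le. intros i _. apply Rmult_le_compat_l; auto. }
  lra.
Qed.

Section Expectation.
Variable p : nat -> R.
Variable lam : R.
Hypothesis Hp : forall n, 0 <= p n.
Hypothesis Hp1 : infinite_sum p 1.
Hypothesis Hlam : 0 < lam.

Lemma truncated_tail_le r N : rsum (fun n => p n * indicator_ge r n) N <= pmf_tail p r.
Proof.
  assert (Hsplit : forall M, rsum (fun n => p n * indicator_ge r n) M + rsum p r <= rsum p (Nat.max M r)).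
  { induction M as [|M IH]; [simpl; lra|]. cbn [rsum]. unfold indicator_ge at 2.
    destruct (Nat.leb r M) eqn:E.
    - apply Nat.leb_le in E. rewrite (Nat.max_l (S M) r), (Nat.max_l M r) in * by lia.
      simpl. lra.
    - apply Nat.leb_gt in E. rewrite (Nat.max_r (S M) r), (Nat.max_r M r) in * by lia. lra. }
  rewrite pmf_tail_rsum. pose proof (Hsplit N).
  pose proof (rsum_le_infinite_sum p 1 (Nat.max N r) Hp Hp1). lra.
Qed.

Lemma layer_cake (G : nat -> R) K N :
  (forall n, 0 <= G n) -> (forall n, G n <= G (S n)) -> (forall n, (K <= n)%nat -> G n = G K) ->
  rsum (fun n => p n * G n) N <= G 0%nat + rsum (fun i => (G (S i) - G i) * pmf_tail p (S i)) K.
Proof.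
  intros HG Hmono HK.
  rewrite (rsum_ext _ (fun n => G 0%nat * p n
             + rsum (fun i => p n * ((G (S i) - G i) * indicator_ge (S i) n)) K)).
  2:{ intros n _. rewrite (increment_decomposition G K n HK) at 1.
      rewrite Rmult_plus_distr_l, <- rsum_scal. ring. }
  rewrite rsum_plus, rsum_scal, rsum_exchange.
  assert (G 0%nat * rsum p N <= G 0%nat).
  { pose proof (rsum_le_infinite_sum p 1 N Hp Hp1). pose proof (HG 0%nat). nra. }
  assert (rsum (fun i => rsum (fun n => p n * ((G (S i) - G i) * indicator_ge (S i) n)) N) K
          <= rsum (fun i => (G (S i) - G i) * pmf_tail p (S i)) K).
  { apply rsum_le. intros i _.
    rewrite (rsum_ext _ (fun n => (G (S i) - G i) * (p n * indicator_ge (S i) n))) by (intros; ring).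
    rewrite rsum_scal. apply Rmult_le_compat_l; [specialize (Hmono i); lra|apply truncated_tail_le]. }
  lra.
Qed.

Theorem expectation_le (G : nat -> R) (K k : nat) (B : R) :
  (K <= k)%nat ->
  (forall n, 0 <= G n) -> (forall n, G n <= G (S n)) -> (forall n, (K <= n)%nat -> G n = G K) ->
  (forall n, INR n < lam -> (n <= K)%nat -> G n <= B) ->
  poisson_side lam G K <= B ->
  forall E, infinite_sum (fun n => p n * G n) E -> E <= (eta p lam k + 1) * B.
Proof.
  intros HKk HG Hmono HK Hbelow Hside E HE.
  pose proof (eta_nonneg p lam k) as Heta.
  destruct (below_mean_telescope G lam K Hlam) as [n [HnK [Hn [Hbelow_sum _]]]].
  pose proof (Hbelow n Hn HnK).
  pose proof (above_mean_by_parts G lam K Hlam HG) as Habove.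
  assert (Hsplit : rsum (fun i => (G (S i) - G i) * pmf_tail p (S i)) K
                   <= rsum (fun i => (G (S i) - G i) * below_mean lam (S i)) K
                      + eta p lam k * rsum (fun i => (G (S i) - G i) * tail_above_mean lam (S i)) K).
  { rewrite <- rsum_scal, <- rsum_plus. apply rsum_le. intros i Hi.
    pose proof (pmf_tail_split p lam k (S i) Hp Hlam ltac:(lia)). specialize (Hmono i).
    replace ((G (S i) - G i) * below_mean lam (S i) + eta p lam k * ((G (S i) - G i) * tail_above_mean lam (S i)))
      with ((G (S i) - G i) * (below_mean lam (S i) + eta p lam k * tail_above_mean lam (S i))) by ring.
    apply Rmult_le_compat_l; lra. }
  assert (eta p lam k * rsum (fun i => (G (S i) - G i) * tail_above_mean lam (S i)) K <= eta p lam k * B).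
  { apply Rmult_le_compat_l; lra. }
  apply (infinite_sum_le _ _ _ HE). intros N.
  pose proof (layer_cake G K N HG Hmono HK). lra.
Qed.

End Expectation.

Definition weighted_g1 (lam : R) (k m n : nat) : R :=
  INR (Nat.min n k) ^ m * g1 lam (Nat.min n k).

Section WeightedG1.
Variable lam : R.
Hypothesis Hlam : 0 < lam.
Variables k m : nat.

Let x := pospart (INR k - lam).

Lemma weighted_g1_nonneg n : 0 <= weighted_g1 lam k m n.
Proof. apply Rmult_le_pos; [apply pow_le, pos_INR|apply g1_nonneg; auto]. Qed.

Lemma weighted_g1_step n : weighted_g1 lam k m n <= weighted_g1 lam k m (S n).
Proof.
  unfold weighted_g1. apply Rmult_le_compat; [apply pow_le, pos_INR|apply g1_nonneg; auto| |].
  - apply pow_incr. split; [apply pos_INR|apply le_INR; lia].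
  - apply g1_monotone; auto; lia.
Qed.

Lemma weighted_g1_const n : (k <= n)%nat -> weighted_g1 lam k m n = weighted_g1 lam k m k.
Proof. intros Hn. unfold weighted_g1. rewrite !Nat.min_r by lia. reflexivity. Qed.

Lemma weighted_g1_below n : INR n < lam -> (n <= k)%nat -> weighted_g1 lam k (S m) n <= lam ^ m.
Proof. intros Hn Hnk. unfold weighted_g1. rewrite Nat.min_l by lia. apply weighted_small; auto; lra. Qed.

Lemma weighted_g1_side_sum :
  rsum (fun i => weighted_g1 lam k (S m) (S i) * poisson_above lam (S i)) k
  <= (lam + x) ^ m * (2 * lam + 2 * x ^ 2) / lam.
Proof.
  pose proof (pospart_nonneg (INR k - lam)) as Hx. fold x in Hx.
  assert (Hcoef : 0 <= (lam + x) ^ m / lam) by (apply div_nonneg; [apply pow_le|]; lra).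
  apply Rle_trans with
    (rsum (fun i => (lam + x) ^ m / lam * (INR (S i) * poisson lam (S i) + pospart (INR (S i) - lam))) k).
  - apply rsum_le. intros i Hi. unfold weighted_g1. rewrite Nat.min_l by lia.
    pose proof (weighted_term lam Hlam (S i)) as Hterm.
    assert (Hind : 0 <= INR (S i) * g1 lam (S i) * poisson_above lam (S i)).
    { pose proof (g1_nonneg lam Hlam (S i)). pose proof (pos_INR (S i)). pose proof (poisson_pos lam (S i) Hlam).
      unfold poisson_above. destruct Rle_dec; [|lra]. apply Rmult_le_pos; nra. }
    assert (Hpow : INR (S i) ^ m <= (lam + x) ^ m).
    { apply pow_incr. split; [apply pos_INR|]. pose proof (index_le_excess lam k) as Hk. fold x in Hk.
      apply le_INR in Hi. lra. }
    replace (INR (S i) ^ S m * g1 lam (S i) * poisson_above lam (S i))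
      with (INR (S i) ^ m * (INR (S i) * g1 lam (S i) * poisson_above lam (S i)))
      by (simpl; ring).
    apply Rle_trans with ((lam + x) ^ m * (INR (S i) * g1 lam (S i) * poisson_above lam (S i))).
    + apply Rmult_le_compat_r; auto.
    + replace ((lam + x) ^ m / lam * (INR (S i) * poisson lam (S i) + pospart (INR (S i) - lam)))
        with ((lam + x) ^ m * ((INR (S i) * poisson lam (S i) + pospart (INR (S i) - lam)) / lam)) by (field; lra).
      apply Rmult_le_compat_l; [apply pow_le; lra|]. apply le_div_iff; auto. lra.
  - rewrite rsum_scal, rsum_plus. pose proof (first_moment lam Hlam k).
    destruct (pospart_sum lam Hlam k) as [_ Hpos]. fold x in Hpos.
    replace ((lam + x) ^ m * (2 * lam + 2 * x ^ 2) / lam) with ((lam + x) ^ m / lam * (2 * lam + 2 * x ^ 2)) by (field; lra).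
    apply Rmult_le_compat_l; lra.
Qed.

Lemma weighted_g1_side_tail :
  weighted_g1 lam k (S m) k * tail_above_mean lam (S k) <= lam ^ m + INR k ^ S m / lam + 2 * INR k ^ m.
Proof.
  unfold weighted_g1, tail_above_mean. rewrite Nat.min_id. pose proof (weighted_tail lam Hlam k m).
  pose proof (g1_nonneg lam Hlam k). pose proof (pos_INR k).
  assert (0 <= INR k ^ S m * g1 lam k) by (apply Rmult_le_pos; [apply pow_le|]; lra).
  destruct Rle_dec; [lra|]. rewrite Rmult_0_r.
  pose proof (pow_le lam m). pose proof (pow_le (INR k) m). pose proof (pow_le (INR k) (S m)).
  assert (0 <= INR k ^ S m / lam) by (apply div_nonneg; lra). lra.
Qed.

End WeightedG1.

Section ShiftedG1.
Variable lam : R.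
Hypothesis Hlam : 0 < lam.
Variable k : nat.

Let y := pospart (INR k + 1 - lam).

Lemma shifted_g1_below n : INR n < lam ->
  g1 lam (Nat.min (S n) k) <= 2 * (1 / lam + y ^ 2 / lam ^ 2).
Proof.
  intros Hn. pose proof (pospart_nonneg (INR k + 1 - lam)) as Hy. fold y in Hy.
  assert (0 < lam ^ 2) by nra. assert (0 <= y ^ 2 / lam ^ 2) by (apply div_nonneg; nra).
  assert (0 <= 1 / lam) by (apply div_nonneg; lra).
  destruct (Rle_dec (INR (Nat.min (S n) k)) lam) as [Hj|Hj].
  - pose proof (g1_small lam Hlam _ Hj). lra.
  - assert (Hy1 : 1 <= y).
    { unfold y, pospart. eapply Rle_trans; [|apply Rmax_l].
      pose proof (le_INR (Nat.min (S n) k) k ltac:(lia)). lra. }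
    pose proof (g1_monotone lam Hlam (Nat.min (S n) k) (S n) ltac:(lia)).
    assert (Hnear : lam * g1 lam (S n) <= 2 + 1 / lam).
    { rewrite (g1_succ_form lam Hlam). pose proof (cdf_ratio_small lam Hlam n ltac:(lra)) as HF.
      pose proof (cdf_ratio_nonneg lam Hlam n). pose proof (pos_INR n).
      pose proof (le_INR (Nat.min (S n) k) (S n) ltac:(lia)). rewrite S_INR in *.
      assert (HF1 : cdf_ratio lam n <= 1 + 1 / lam).
      { eapply Rle_trans; [exact HF|]. apply div_le_iff; auto.
        replace ((1 + 1 / lam) * lam) with (lam + 1) by (field; lra). lra. }
      nra. }
    assert (1 / lam <= y ^ 2 / lam)
      by (unfold Rdiv; apply Rmult_le_compat_r; [left; apply Rinv_0_lt_compat|]; nra).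
    assert (0 <= y ^ 2 / lam) by (apply div_nonneg; nra).
    replace (2 * (1 / lam + y ^ 2 / lam ^ 2)) with ((2 + 2 * (y ^ 2 / lam)) / lam) by (field; lra).
    apply (le_div_iff _ _ _ Hlam). nra.
Qed.

Lemma shifted_g1_side_sum :
  rsum (fun i => g1 lam (Nat.min (S (S i)) k) * poisson_above lam (S i))
       (Nat.pred k) <= (2 * lam + 2 * y ^ 2) / lam ^ 2.
Proof.
  assert (Hl2 : 0 < lam ^ 2) by nra.
  apply Rle_trans with (rsum (fun i => / lam ^ 2 * (INR (S (S i)) * poisson lam (S (S i)))
                                      + / lam ^ 2 * pospart (INR (S (S i)) - lam)) (Nat.pred k)).
  - apply rsum_le. intros i Hi. rewrite Nat.min_l by lia.
    pose proof (weighted_term lam Hlam (S (S i))) as Hterm. unfold poisson_above in Hterm.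
    pose proof (pospart_nonneg (INR (S (S i)) - lam)). pose proof (poisson_pos lam (S (S i)) Hlam).
    pose proof (pos_INR (S (S i))). pose proof (Rinv_0_lt_compat _ Hl2).
    unfold poisson_above at 1. destruct (Rle_dec lam (INR (S i))) as [Hi1|Hi1];
      [|rewrite Rmult_0_r; apply Rplus_le_le_0_compat; apply Rmult_le_pos; nra].
    destruct (Rle_dec lam (INR (S (S i)))) as [Hi2|Hi2]; [|rewrite (S_INR (S i)) in Hi2; lra].
    assert (0 < INR (S (S i))) by (apply lt_0_INR; lia).
    replace (poisson lam (S i)) with (poisson lam (S (S i)) * INR (S (S i)) / lam)
      by (rewrite (poisson_succ lam (S i)); field; split; lra).
    replace (g1 lam (S (S i)) * (poisson lam (S (S i)) * INR (S (S i)) / lam))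
      with (/ lam ^ 2 * (lam * (INR (S (S i)) * g1 lam (S (S i))) * poisson lam (S (S i)))) by (field; lra).
    rewrite <- Rmult_plus_distr_l. apply Rmult_le_compat_l; lra.
  - rewrite rsum_plus, !rsum_scal.
    pose proof (first_moment lam Hlam (S (Nat.pred k))) as Hmom. rewrite rsum_shift in Hmom.
    destruct (pospart_sum lam Hlam (S (Nat.pred k))) as [_ Hpos]. rewrite rsum_shift in Hpos.
    pose proof (poisson_pos lam 1 Hlam). pose proof (pos_INR 1). pose proof (pospart_nonneg (INR 1 - lam)).
    assert (Hmono : pospart (INR (S (Nat.pred k)) - lam) <= y)
      by (unfold y; apply pospart_mono; pose proof (le_INR (S (Nat.pred k)) (S k) ltac:(lia));
          rewrite (S_INR k) in *; lra).
    pose proof (pospart_nonneg (INR (S (Nat.pred k)) - lam)).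
    assert (pospart (INR (S (Nat.pred k)) - lam) ^ 2 <= y ^ 2) by (apply pow_incr; lra).
    replace ((2 * lam + 2 * y ^ 2) / lam ^ 2) with (/ lam ^ 2 * lam + / lam ^ 2 * (2 * y ^ 2 + lam)) by (field; lra).
    pose proof (Rinv_0_lt_compat _ Hl2).
    apply Rplus_le_compat; apply Rmult_le_compat_l; nra.
Qed.

Lemma shifted_g1_side_tail :
  g1 lam (Nat.min (S (Nat.pred k)) k) * tail_above_mean lam (S (Nat.pred k)) <= 3 / lam.
Proof.
  assert (0 <= 3 / lam) by (apply div_nonneg; lra).
  destruct k as [|k']; [simpl; lra|]. simpl Nat.pred. rewrite Nat.min_id.
  pose proof (g1_tail_at lam Hlam (S k')). apply (le_div_iff _ _ _ Hlam). lra.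
Qed.

End ShiftedG1.

Lemma infinite_sum_ext f g E : (forall n, f n = g n) -> infinite_sum f E -> infinite_sum g E.
Proof.
  intros Hfg HE e He. destruct (HE e He) as [N HN]. exists N. intros n Hn.
  rewrite <- (sum_eq f g n) by (intros; apply Hfg). apply HN, Hn.
Qed.

Section Bounds.
Variable p : nat -> R.
Variable lam : R.
Hypothesis Hp : forall n, 0 <= p n.
Hypothesis Hp1 : infinite_sum p 1.
Hypothesis Hlam : 0 < lam.

Lemma first_bound k E :
  infinite_sum (fun n => p n * g1 lam (Nat.min (S n) k)) E ->
  E <= (eta p lam k + 1) * (5 * (1 / lam + pospart (INR k + 1 - lam) ^ 2 / lam ^ 2)).
Proof.
  intros HE. set (y := pospart (INR k + 1 - lam)).
  assert (Hl2 : 0 < lam ^ 2) by nra.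
  assert (Hy2 : 0 <= y ^ 2 / lam ^ 2) by (apply div_nonneg; nra).
  assert (Hinv : 0 <= 1 / lam) by (apply div_nonneg; lra).
  apply (expectation_le p lam Hp Hp1 Hlam (fun n => g1 lam (Nat.min (S n) k)) (Nat.pred k) k); auto.
  - lia.
  - intros n. apply g1_nonneg; auto.
  - intros n. apply g1_monotone; auto; lia.
  - intros n Hn. rewrite (Nat.min_r (S n) k), (Nat.min_r (S (Nat.pred k)) k) by lia. reflexivity.
  - intros n Hn _. pose proof (shifted_g1_below lam Hlam k n Hn) as Hbelow. fold y in Hbelow. lra.
  - unfold poisson_side. pose proof (shifted_g1_side_sum lam Hlam k) as Hsum.
    pose proof (shifted_g1_side_tail lam Hlam k) as Htail. fold y in Hsum.
    replace ((2 * lam + 2 * y ^ 2) / lam ^ 2) with (2 * (1 / lam) + 2 * (y ^ 2 / lam ^ 2)) in Hsum by (field; lra).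
    replace (3 / lam) with (3 * (1 / lam)) in Htail by (field; lra). lra.
Qed.

Lemma second_bound k E :
  infinite_sum (fun n => p n * (INR (Nat.min n k) * g1 lam (Nat.min n k))) E ->
  E <= (eta p lam k + 1) * (8 * (1 + pospart (INR k - lam) ^ 2 / lam)).
Proof.
  intros HE. set (x := pospart (INR k - lam)). pose proof (pospart_nonneg (INR k - lam)) as Hx. fold x in Hx.
  assert (Ht : 0 <= x ^ 2 / lam) by (apply div_nonneg; nra).
  apply (expectation_le p lam Hp Hp1 Hlam (weighted_g1 lam k 1) k k); auto.
  - apply weighted_g1_nonneg; auto.
  - apply weighted_g1_step; auto.
  - apply weighted_g1_const.
  - intros n Hn Hnk. pose proof (weighted_g1_below lam Hlam k 0 n Hn Hnk). simpl in *. lra.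
  - unfold poisson_side. pose proof (weighted_g1_side_sum lam Hlam k 0) as Hsum.
    pose proof (weighted_g1_side_tail lam Hlam k 0) as Htail. fold x in Hsum. simpl pow in *.
    assert (Hk : INR k / lam <= 3 + 2 * (x ^ 2 / lam)).
    { pose proof (index_le_excess lam k) as Hkx. pose proof (excess_le lam Hlam k) as Hxl. fold x in Hkx, Hxl.
      apply div_le_iff; auto. replace ((3 + 2 * (x ^ 2 / lam)) * lam) with (3 * lam + 2 * x ^ 2) by (field; lra). lra. }
    replace (1 * (2 * lam + 2 * (x * (x * 1))) / lam) with (2 + 2 * (x ^ 2 / lam)) in Hsum by (simpl; field; lra).
    replace (INR k * 1 / lam) with (INR k / lam) in Htail by (field; lra). lra.
  - eapply infinite_sum_ext; [|exact HE]. intros n. unfold weighted_g1. simpl. ring.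
Qed.

Lemma third_bound k E :
  infinite_sum (fun n => p n * (INR (Nat.min n k) ^ 2 * g1 lam (Nat.min n k))) E ->
  E <= (eta p lam k + 1)
       * (18 * (lam + pospart (INR k - lam) ^ 2 + pospart (INR k - lam) ^ 3 / lam)).
Proof.
  intros HE. set (x := pospart (INR k - lam)). pose proof (pospart_nonneg (INR k - lam)) as Hx. fold x in Hx.
  assert (Hx3 : 0 <= x ^ 3 / lam) by (apply div_nonneg; [apply pow_le|]; lra).
  apply (expectation_le p lam Hp Hp1 Hlam (weighted_g1 lam k 2) k k); auto.
  - apply weighted_g1_nonneg; auto.
  - apply weighted_g1_step; auto.
  - apply weighted_g1_const.
  - intros n Hn Hnk. pose proof (weighted_g1_below lam Hlam k 1 n Hn Hnk). simpl in *. nra.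
  - unfold poisson_side. pose proof (weighted_g1_side_sum lam Hlam k 1) as Hsum.
    pose proof (weighted_g1_side_tail lam Hlam k 1) as Htail. fold x in Hsum.
    pose proof (index_le_excess lam k) as Hk. pose proof (excess_le lam Hlam k) as Hxl.
    pose proof (excess_sq_le lam Hlam k) as Hxs. fold x in Hk, Hxl, Hxs. pose proof (pos_INR k).
    apply Rle_trans with ((lam + x) * (2 * lam + 2 * x ^ 2) / lam + (lam + INR k ^ 2 / lam + 2 * INR k));
      [simpl pow in *; lra|].
    apply (Rmult_le_reg_l lam); auto.
    replace (lam * ((lam + x) * (2 * lam + 2 * x ^ 2) / lam + (lam + INR k ^ 2 / lam + 2 * INR k)))
      with ((lam + x) * (2 * lam + 2 * x ^ 2) + lam * lam + INR k ^ 2 + 2 * lam * INR k) by (field; lra).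
    replace (lam * (18 * (lam + x ^ 2 + x ^ 3 / lam)))
      with (18 * (lam * lam + lam * x ^ 2 + x ^ 3)) by (field; lra).
    assert (INR k ^ 2 <= (lam + x) ^ 2) by (apply pow_incr; lra).
    assert (lam * INR k <= lam * (lam + x)) by (apply Rmult_le_compat_l; lra).
    assert (lam * x <= lam * (2 * lam + 2 * x ^ 2)) by (apply Rmult_le_compat_l; lra).
    nra.
Qed.

End Bounds.

Lemma constant_weaken e B c C E : 0 <= e -> 0 <= B -> c <= C ->
  E <= (e + 1) * (c * B) -> E <= C * (e + 1) * B.
Proof. intros He HB HcC HE. assert ((e + 1) * (c * B) <= (e + 1) * (C * B)) by (apply Rmult_le_compat_l; nra). nra. Qed.

Theorem lemma4p5 :
  exists C : R,
  forall (p : nat -> R) (lam : R),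
    (forall n, 0 <= p n) ->
    infinite_sum p 1 ->
    infinite_sum (fun n => INR n * p n) lam ->
    0 < lam ->
    forall k : nat,
      (forall E, infinite_sum (fun n => p n * g1 lam (Nat.min (S n) k)) E ->
         E <= C * (eta p lam k + 1)
                * (1 / lam + (pospart (INR k + 1 - lam)) ^ 2 / lam ^ 2)) /\
      (forall E, infinite_sum
                   (fun n => p n * (INR (Nat.min n k) * g1 lam (Nat.min n k))) E ->
         E <= C * (eta p lam k + 1)
                * (1 + (pospart (INR k - lam)) ^ 2 / lam)) /\
      (forall E, infinite_sum
                   (fun n => p n * (INR (Nat.min n k) ^ 2 * g1 lam (Nat.min n k))) E ->
         E <= C * (eta p lam k + 1)
                * (lam + (pospart (INR k - lam)) ^ 2 + (pospart (INR k - lam)) ^ 3 / lam)).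
Proof.
  exists 18. intros p lam Hp Hp1 _ Hlam k.
  pose proof (eta_nonneg p lam k) as Heta.
  assert (Hl2 : 0 < lam ^ 2) by nra.
  split; [|split]; intros E HE.
  - set (y := pospart (INR k + 1 - lam)).
    assert (0 <= 1 / lam + y ^ 2 / lam ^ 2)
      by (apply Rplus_le_le_0_compat; apply div_nonneg; nra).
    apply (constant_weaken _ _ 5); auto; [lra|]. apply first_bound; auto.
  - set (x := pospart (INR k - lam)).
    assert (0 <= 1 + x ^ 2 / lam) by (pose proof (div_nonneg (x ^ 2) lam ltac:(nra) Hlam); lra).
    apply (constant_weaken _ _ 8); auto; [lra|]. apply second_bound; auto.
  - set (x := pospart (INR k - lam)). pose proof (pospart_nonneg (INR k - lam)) as Hx. fold x in Hx.
    assert (0 <= lam + x ^ 2 + x ^ 3 / lam)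
      by (pose proof (div_nonneg (x ^ 3) lam ltac:(apply pow_le; lra) Hlam); nra).
    apply (constant_weaken _ _ 18); auto; [lra|]. apply third_bound; auto.
Qed.
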